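(* Let $a>0$, $\mu\ge 0$, $\lambda>0$, and let $f$ and $g$ be functions of $(x,t)$ such that there are positive constants $C_1,C_2$ with $$\sup\{|f(x,t)|: x\in[0,a],\ t\ge0\}\le C_1,\qquad \inf\{g(x,t): x\in[0,a),\ t\ge 0\}\ge C_2$$ ($g$ may be singular at $x=a$). Consider the equation $$\ddot{x}+\mu\dot{x}+f(x,t)=\lambda g(x,t)$$ with initial condition $x(0)=0$, $\dot{x}(0)=0$, whose physically meaningful solution takes values in $[0,a]$, $x=a$ being the touch-down position. If $\lambda>0$ is sufficiently large, then there is a finite time $t_c>0$, depending on $\lambda$ and $a$, such that the solution climbs monotonically to the touch-down position at $t=t_c$, that is, $$x(t_c)=\lim_{t\to t_c}x(t)=a\quad\text{and}\quad \dot{x}(t)>0\ \text{ for all } t\in(0,t_c).$$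
   Context: This is a normalized equation of motion for an electrostatic actuator with damping constant $\mu\ge0$, a restoring-type force $f$, and a Coulomb-like driving force $\lambda g$ with coupling parameter $\lambda$ resembling the applied voltage; the solution is considered only while $0\le x(t)<a$. *)

From Stdlib Require Import Reals.
From Coquelicot Require Import Coquelicot.
Open Scope R_scope.

(* A (maximal, physically meaningful) solution of
     x'' + mu x' + f(x,t) = lam g(x,t),  x(0)=0, x'(0)=0
   on the time interval [0,T), T in (0,+oo], with position x and velocity v,
   taking values in [0,a), and which ceases to be considered only when it
   reaches the touch-down position a (if T is finite, x(t) -> a as t -> T-). *)
Definition actuator_solution (a mu lam : R) (f g : R -> R -> R)
    (T : Rbar) (x v : R -> R) : Prop :=
  Rbar_lt (Finite 0) T /\
  x 0 = 0 /\ v 0 = 0 /\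
  filterlim x (at_right 0) (locally 0) /\
  filterlim v (at_right 0) (locally 0) /\
  (forall t, 0 <= t -> Rbar_lt (Finite t) T -> 0 <= x t < a) /\
  (forall t, 0 < t -> Rbar_lt (Finite t) T ->
     is_derive x t (v t) /\
     exists acc, is_derive v t acc /\
       acc + mu * v t + f (x t) t = lam * g (x t) t) /\
  (T = p_infty \/ exists tc, T = Finite tc /\ filterlim x (at_left tc) (locally a)).

From Stdlib Require Import Reals Lra.
From Coquelicot Require Import Coquelicot.
Open Scope R_scope.

(* For [lam > C1 / C2] the net force [lam g - f] is at least [K := lam C2 - C1 > 0], so
   [v' + mu v >= K].  With the integrating factor [exp (mu t)] this gives
   [v t exp (mu t) >= K t > 0], so the motion is monotone; and [(v + mu x)' >= K] gives
   [v t >= K t - mu a], so a solution living forever would leave [[0, a)].  Hence the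
   solution exists only up to a finite touch-down time [tc]. *)

Lemma derive_ge_diff (F : R -> R) (c s t : R) : s <= t ->
  (forall u, s <= u <= t -> exists d, is_derive F u d /\ c <= d) ->
  c * (t - s) <= F t - F s.
Proof.
  intros Hst HF.
  assert (Hrange : forall u, Rmin s t <= u <= Rmax s t -> s <= u <= t).
  { intros u; rewrite Rmin_left, Rmax_right; lra. }
  destruct (MVT_gen F s t (Derive F)) as [z [Hz ->]].
  - intros u Hu; destruct (HF u ltac:(apply Hrange; lra)) as [d [Hd _]].
    now rewrite (is_derive_unique F u d Hd).
  - intros u Hu; destruct (HF u (Hrange u Hu)) as [d [Hd _]].
    apply continuity_pt_filterlim.
    exact (@ex_derive_continuous R_AbsRing R_NormedModule F u (ex_intro _ d Hd)).
  - destruct (HF z (Hrange z Hz)) as [d [Hd Hcd]].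
    rewrite (is_derive_unique _ _ _ Hd); apply Rmult_le_compat_r; lra.
Qed.

Lemma filterlim_at_right_continuous (h : R -> R) (x0 : R) :
  continuous h x0 -> filterlim h (at_right x0) (locally (h x0)).
Proof.
  intros Hh; exact (filterlim_filter_le_1 _ (filter_le_within (F := locally x0) _) Hh).
Qed.

Lemma derive_ge_right_limit (F : R -> R) (l c t : R) : 0 < t ->
  filterlim F (at_right 0) (locally l) ->
  (forall u, 0 < u <= t -> exists d, is_derive F u d /\ c <= d) ->
  l + c * t <= F t.
Proof.
  intros Ht HFl HF.
  assert (Hlim : filterlim (fun y => F y + c * (t - y)) (at_right 0)
                (locally (l + c * (t - 0)))).
  { apply (filterlim_comp_2 (H := locally (c * (t - 0))) _ _ plus HFl);
      [|exact (filterlim_plus l _)].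
    apply (filterlim_at_right_continuous (fun y => c * (t - y))).
    apply (ex_derive_continuous (K := R_AbsRing) (V := R_NormedModule)).
    auto_derive; exact I. }
  rewrite Rminus_0_r in Hlim.
  assert (Hev : at_right 0 (fun y => F y + c * (t - y) <= F t)).
  { exists (mkposreal t Ht); intros y Hy Hy0.
    assert (Hyt : y < t).
    { unfold ball in Hy; simpl in Hy; unfold AbsRing_ball, abs, minus, plus, opp in Hy;
      simpl in Hy; rewrite Ropp_0, Rplus_0_r, Rabs_right in Hy; lra. }
    pose proof (derive_ge_diff F c y t ltac:(lra) ltac:(intros u Hu; apply HF; lra)).
    lra. }
  exact (filterlim_le _ _ (l + c * t) (F t) Hev Hlim (filterlim_const (F t))).
Qed.

Section DrivenMotion.

Variables (mu K : R) (T : Rbar) (x v : R -> R).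

Hypothesis Hmu : 0 <= mu.
Hypothesis HK : 0 < K.
Hypothesis Hx0 : filterlim x (at_right 0) (locally 0).
Hypothesis Hv0 : filterlim v (at_right 0) (locally 0).
Hypothesis Hxv : forall t, 0 < t -> Rbar_lt t T -> is_derive x t (v t).
Hypothesis Hforce : forall t, 0 < t -> Rbar_lt t T ->
  exists acc, is_derive v t acc /\ K <= acc + mu * v t.

Lemma lt_horizon_of_le (u t : R) : u <= t -> Rbar_lt t T -> Rbar_lt u T.
Proof. intros Hut; apply Rbar_le_lt_trans; simpl; lra. Qed.

Lemma weighted_velocity_lb (t : R) : 0 < t -> Rbar_lt t T ->
  K * t <= v t * exp (mu * t).
Proof.
  intros Ht HtT.
  rewrite <- (Rplus_0_l (K * t)).
  apply (derive_ge_right_limit (fun u => v u * exp (mu * u))); [exact Ht| |].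
  - assert (Hexp : filterlim (fun u => exp (mu * u)) (at_right 0) (locally (exp (mu * 0)))).
    { apply (filterlim_at_right_continuous (fun u => exp (mu * u))), continuous_exp_comp.
      apply (ex_derive_continuous (K := R_AbsRing) (V := R_NormedModule)).
      auto_derive; exact I. }
    pose proof (filterlim_comp_2 _ _ Rmult Hv0 Hexp (filterlim_mult 0 _)) as HW.
    now rewrite Rmult_0_l in HW.
  - intros u Hu.
    destruct (Hforce u ltac:(lra) (lt_horizon_of_le u t ltac:(lra) HtT))
      as [acc [Hdv Hacc]].
    exists ((acc + mu * v u) * exp (mu * u)); split.
    + evar (d : R); replace ((acc + mu * v u) * exp (mu * u)) with d;
        [apply (is_derive_mult v (fun u => exp (mu * u))); [exact Hdv| |]|].
      * auto_derive; [exact I| reflexivity].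
      * intros; apply Rmult_comm.
      * unfold d, plus, mult; simpl; ring.
    + assert (1 <= exp (mu * u)).
      { pose proof (exp_ineq1_le (mu * u)).
        assert (0 <= mu * u) by (apply Rmult_le_pos; lra); lra. }
      nra.
Qed.

Lemma velocity_pos (t : R) : 0 < t -> Rbar_lt t T -> 0 < v t.
Proof.
  intros Ht HtT.
  pose proof (weighted_velocity_lb t Ht HtT).
  pose proof (exp_pos (mu * t)).
  destruct (Rle_lt_dec (v t) 0); [nra| lra].
Qed.

Lemma momentum_lb (t : R) : 0 < t -> Rbar_lt t T -> K * t <= v t + mu * x t.
Proof.
  intros Ht HtT.
  rewrite <- (Rplus_0_l (K * t)).
  apply (derive_ge_right_limit (fun u => v u + mu * x u)); [exact Ht| |].
  - pose proof (filterlim_comp _ _ _ _ _ _ _ _ Hx0 (filterlim_scal_r mu 0)) as Hmux.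
    pose proof (filterlim_comp_2 _ _ Rplus Hv0 Hmux (filterlim_plus 0 _)) as HP.
    unfold scal in HP; simpl in HP; unfold mult in HP; simpl in HP.
    now rewrite Rmult_0_r, Rplus_0_l in HP.
  - intros u Hu.
    destruct (Hforce u ltac:(lra) (lt_horizon_of_le u t ltac:(lra) HtT))
      as [acc [Hdv Hacc]].
    exists (acc + mu * v u); split; [|exact Hacc].
    apply (is_derive_plus v (fun u => mu * x u) u acc (mu * v u) Hdv).
    apply is_derive_scal, Hxv; [lra| exact (lt_horizon_of_le u t ltac:(lra) HtT)].
Qed.

(* Once [K t >= mu a + 1], the momentum bound forces [v >= 1], so [x] gains more than [a]
   in time [a + 1]. *)
Lemma finite_horizon (a : R) : 0 <= a ->
  (forall t, 0 < t -> Rbar_lt t T -> 0 <= x t <= a) -> T <> p_infty.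
Proof.
  intros Ha Hxa HT.
  assert (HuT : forall u : R, Rbar_lt u T) by (intros u; rewrite HT; exact I).
  set (s := (mu * a + 1) / K).
  assert (Hs : 0 < s) by (unfold s; apply Rdiv_lt_0_compat; nra).
  assert (HKs : K * s = mu * a + 1) by (unfold s; field; lra).
  assert (Hgain : 1 * (s + a + 1 - s) <= x (s + a + 1) - x s).
  { apply derive_ge_diff; [lra|]; intros u Hu.
    exists (v u); split; [apply Hxv; [lra| apply HuT]|].
    pose proof (momentum_lb u ltac:(lra) (HuT u)).
    pose proof (Hxa u ltac:(lra) (HuT u)).
    assert (K * s <= K * u) by (apply Rmult_le_compat_l; lra).
    assert (mu * x u <= mu * a) by (apply Rmult_le_compat_l; lra).
    lra. }
  pose proof (Hxa s Hs (HuT s)); pose proof (Hxa (s + a + 1) ltac:(lra) (HuT _)); lra.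
Qed.

End DrivenMotion.

Lemma actuator_accel_lb (a mu lam : R) (f g : R -> R -> R) (C1 C2 : R)
    (T : Rbar) (x v : R -> R) :
  0 < lam ->
  (forall x t, 0 <= x <= a -> 0 <= t -> Rabs (f x t) <= C1) ->
  (forall x t, 0 <= x < a -> 0 <= t -> C2 <= g x t) ->
  actuator_solution a mu lam f g T x v ->
  forall t, 0 < t -> Rbar_lt t T ->
    exists acc, is_derive v t acc /\ lam * C2 - C1 <= acc + mu * v t.
Proof.
  intros Hlam Hf Hg [_ [_ [_ [_ [_ [Hrange [Hode _]]]]]]] t Ht HtT.
  destruct (Hode t Ht HtT) as [_ [acc [Hdv Heq]]].
  exists acc; split; [exact Hdv|].
  destruct (Hrange t ltac:(lra) HtT) as [Hxt0 Hxta].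
  pose proof (proj1 (Rabs_le_between _ _) (Hf (x t) t ltac:(lra) ltac:(lra))).
  pose proof (Rmult_le_compat_l lam _ _ ltac:(lra) (Hg (x t) t ltac:(lra) ltac:(lra))).
  lra.
Qed.

Theorem theorem3 (a mu : R) (f g : R -> R -> R) (C1 C2 : R) :
  0 < a -> 0 <= mu -> 0 < C1 -> 0 < C2 ->
  (forall x t, 0 <= x <= a -> 0 <= t -> Rabs (f x t) <= C1) ->
  (forall x t, 0 <= x < a -> 0 <= t -> C2 <= g x t) ->
  exists Lam : R, forall lam : R, Lam < lam -> 0 < lam ->
    forall (T : Rbar) (x v : R -> R),
      actuator_solution a mu lam f g T x v ->
      exists tc : R, T = Finite tc /\ 0 < tc /\
        filterlim x (at_left tc) (locally a) /\
        (forall t, 0 < t < tc -> 0 < v t).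
Proof.
  intros Ha Hmu HC1 HC2 Hf Hg.
  exists (C1 / C2); intros lam Hlam Hlam0 T x v Hsol.
  assert (HK : 0 < lam * C2 - C1) by (apply Rlt_div_l in Hlam; lra).
  pose proof (actuator_accel_lb a mu lam f g C1 C2 T x v Hlam0 Hf Hg Hsol) as Hforce.
  destruct Hsol as [HT [_ [_ [Hx0 [Hv0 [Hrange [Hode Hend]]]]]]].
  assert (Hxv : forall t, 0 < t -> Rbar_lt t T -> is_derive x t (v t))
    by (intros t Ht HtT; apply (Hode t Ht HtT)).
  destruct Hend as [Hinf | [tc [-> Hlim]]].
  - exfalso; apply (finite_horizon mu _ T x v Hmu HK Hx0 Hv0 Hxv Hforce a); [lra| |exact Hinf].
    intros t Ht HtT; pose proof (Hrange t ltac:(lra) HtT); lra.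
  - exists tc; repeat split; [exact HT| exact Hlim|].
    intros t Ht; apply (velocity_pos mu _ _ v Hmu HK Hv0 Hforce); [lra|simpl; lra].
Qed.
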